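(* Let $\lambda,\nu$ be partitions and $k,\ell,m_1$ nonnegative integers with $\ell+m_1\le k$, and set $m_2=k-\ell-m_1$. Then the set of partitions $\mu$ such that $(\lambda,\mu,\nu)$ is an $sp$-bumping sequence with $|\lambda/\mu|=\ell$ and $|\nu/\mu|=k-\ell$ is in bijection with the set of pairs of partitions $(\mu^\circ,\mu^-)$ such that $(\lambda,\mu^\circ,\mu^-,\nu)$ is an $spo$-bumping sequence with $|\mu^\circ/\lambda|=m_1$, $|\mu^\circ/\mu^-|=\ell$ and $|\nu/\mu^-|=m_2$.
   Context: Partitions are identified with Young diagrams (English convention, rows numbered from the top, columns from the left); $\lambda_1$ is the length of the first row; $\mu\subseteq\lambda$ means $\mu_i\le\lambda_i$ for all $i$, $|\lambda/\mu|=|\lambda|-|\mu|$, and $\lambda/\mu$ is a horizontal strip if no two boxes of $\lambda/\mu$ lie in the same column. An $sp$-bumping sequence is a triple $(\lambda,\mu,\nu)$ of partitions with $\mu\subseteq\lambda$, $\mu\subseteq\nu$, and $\lambda/\mu$, $\nu/\mu$ horizontal strips. An $spo$-bumping sequence is a quadruple $(\lambda,\mu^\circ,\mu^-,\nu)$ of partitions with $\lambda\subseteq\mu^\circ$, $\mu^-\subseteq\mu^\circ$, $\mu^-\subseteq\nu$ such that: (1) $\mu^\circ/\lambda$, $\mu^\circ/\mu^-$ and $\nu/\mu^-$ are horizontal strips; (2) if $\lambda_1\neq\mu^\circ_1$ then $\mu^\circ_1=\mu^-_1$; (3) if $\nu/\mu^-$ and $\mu^\circ/\lambda$ are both nonempty,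 the leftmost box of $\nu/\mu^-$ lies in a column strictly to the right of the rightmost box of $\mu^\circ/\lambda$. *)

From mathcomp Require Import ssreflect ssrfun ssrbool eqtype ssrnat seq path.
Set Implicit Arguments. Unset Strict Implicit. Unset Printing Implicit Defensive.

Definition is_partition (la : seq nat) : bool :=
  sorted geq la && all (fun x => 0 < x) la.

(* row i (0-indexed), column j (1-indexed) *)
Definition part (la : seq nat) (i : nat) : nat := nth 0 la i.

Definition contained (mu la : seq nat) : Prop :=
  forall i, part mu i <= part la i.

Definition psize (la : seq nat) : nat := sumn la.
Definition skew_size (la mu : seq nat) : nat := psize la - psize mu.

Definition in_skew (la mu : seq nat) (i j : nat) : Prop :=
  part mu i < j <= part la i.

Definition horizontal_strip (la mu : seq nat) : Prop :=
  contained mu la /\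
  forall i i' j, in_skew la mu i j -> in_skew la mu i' j -> i = i'.

Definition sp_bumping (la mu nu : seq nat) : Prop :=
  contained mu la /\ contained mu nu /\
  horizontal_strip la mu /\ horizontal_strip nu mu.

Definition spo_bumping (la muo mum nu : seq nat) : Prop :=
  contained la muo /\ contained mum muo /\ contained mum nu /\
      horizontal_strip muo la /\ horizontal_strip muo mum /\
      horizontal_strip nu mum /\
      (part la 0 <> part muo 0 -> part muo 0 = part mum 0) /\
      (* (3): if both nonempty, the leftmost box of nu/mum is strictly right
         of the rightmost box of muo/la; equivalently every box of nu/mum is
         strictly right of every box of muo/la *)
      (forall i j i' j', in_skew nu mum i j -> in_skew muo la i' j' -> j' < j).

From mathcomp Require Import ssreflect ssrfun ssrbool eqtype ssrnat seq path.
From mathcomp Require Import bigop zify.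
From Stdlib Require Import FunctionalExtensionality ProofIrrelevance.
Set Implicit Arguments. Unset Strict Implicit. Unset Printing Implicit Defensive.

(* Partitions are handled through their row functions, and a skew shape a/b is a
   horizontal strip iff the rows interlace.  Both maps of the bijection are then given
   row by row: mu^- is mu plus the m1 leftmost boxes of nu/mu, mu° is la ∪ mu^- with the
   boxes of (la ∩ mu^-)/mu pushed one row down, and mu is read back from (mu°, mu^-)
   row by row.  The bumping conditions become inequalities between consecutive rows and
   the box counts telescoping sums.  The one global point is that mu^- is the only way
   of adding m1 boxes of nu/mu that all lie to the left of the boxes left over in
   nu/mu^-, which is exactly what condition (3) imposes. *)

Definition antitone (f : nat -> nat) := forall i, f i.+1 <= f i.

Definition interlaced (a b : nat -> nat) := forall i, b i <= a i /\ a i.+1 <= b i.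

Lemma antitone_leq f : antitone f -> forall i j, i <= j -> f j <= f i.
Proof.
move=> f_anti; apply: (homo_leq (r := fun x y => y <= x)) => // y x z xy yz.
exact: leq_trans yz xy.
Qed.

Lemma interlaced_antitone_l a b : interlaced a b -> antitone a.
Proof. by move=> ab i; have [ba ab'] := ab i; apply: leq_trans ab' ba. Qed.

Lemma interlaced_antitone_r a b : interlaced a b -> antitone b.
Proof. by move=> ab i; have [ba _] := ab i.+1; have [_ ab'] := ab i; apply: leq_trans ba ab'. Qed.

Lemma interlaced_between a b c : interlaced a c -> (forall i, c i <= b i <= a i) ->
  interlaced a b /\ interlaced b c.
Proof. by move=> ac cba; split=> i; have := ac i; have := cba i; have := cba i.+1; lia. Qed.

Lemma antitone_part x : is_partition x -> antitone (part x).
Proof.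
case/andP=> /(sortedP 0) x_sorted _ i.
by case: (ltnP i.+1 (size x)) => [/x_sorted // | x_le]; rewrite [part x i.+1]nth_default.
Qed.

Lemma part_gt0 x i : is_partition x -> (0 < part x i) = (i < size x).
Proof.
case/andP=> _ /(all_nthP 0) x_pos.
by case: (ltnP i (size x)) => [/x_pos // | x_le]; rewrite [part x i]nth_default.
Qed.

Lemma part_inj x y : is_partition x -> is_partition y -> part x =1 part y -> x = y.
Proof.
move=> x_part y_part xy.
have size_xy i : (i < size x) = (i < size y).
  by rewrite -(part_gt0 _ x_part) -(part_gt0 _ y_part) xy.
have : size x = size y by move: (size_xy (size x)) (size_xy (size y)); rewrite !ltnn; lia.
by move=> size_eq; apply: (eq_from_nth (x0 := 0) size_eq) => i _; apply: xy.
Qed.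

Lemma size_leq_part x N : is_partition x -> part x N = 0 -> size x <= N.
Proof. by move=> x_part xN; rewrite leqNgt -(part_gt0 _ x_part) xN. Qed.

Lemma psize_sum x N : size x <= N -> psize x = \sum_(0 <= i < N) part x i.
Proof.
move=> xN; have tail0 : \sum_(size x <= i < N) part x i = 0.
  by rewrite big_nat_cond big1 // => i /andP[/andP[le_xi _] _]; rewrite /part nth_default.
by rewrite /psize sumnE (big_nth 0) [RHS](@big_cat_nat _ _ _ (size x)) //= tail0 addn0.
Qed.

Lemma horizontal_stripP a b : is_partition a -> is_partition b ->
  horizontal_strip a b <-> interlaced (part a) (part b).
Proof.
move=> a_part b_part; have a_anti := antitone_part a_part.
have b_anti := antitone_part b_part.
split=> [[ba one_row] i | ab].
  split; first exact: ba.
  rewrite leqNgt; apply/negP => lt_b_a.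
  have box_i : in_skew a b i (part a i.+1) by rewrite /in_skew lt_b_a a_anti.
  have box_iS : in_skew a b i.+1 (part a i.+1).
    by rewrite /in_skew leqnn andbT; apply: leq_ltn_trans (b_anti i) lt_b_a.
  by have := one_row _ _ _ box_i box_iS; lia.
split=> [i | i i' j /andP[bj ja] /andP[bj' ja']]; first by case: (ab i).
wlog lt_ii' : i i' bj ja bj' ja' / i < i'.
  by move=> w; case: (ltngtP i i') => [/w | /w | //]; [apply | move=> ->].
by have [_ aS_b] := ab i; have := antitone_leq a_anti lt_ii'; lia.
Qed.

Definition partition_of (f : nat -> nat) (N : nat) : seq nat :=
  mkseq f (find (fun i => f i == 0) (iota 0 N)).

Section PartitionOf.
Variables (f : nat -> nat) (N : nat).
Hypotheses (f_anti : antitone f) (fN : f N = 0).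

Let n := find (fun i => f i == 0) (iota 0 N).

Let n_le : n <= N. Proof. by rewrite -(size_iota 0 N) find_size. Qed.

Let f_gt0 i : i < n -> 0 < f i.
Proof.
move=> lt_in; have lt_iN := leq_trans lt_in n_le.
by have := before_find 0 lt_in; rewrite nth_iota // add0n lt0n => ->.
Qed.

Let f_eq0 i : n <= i -> f i = 0.
Proof.
have f_n : f n = 0.
  case: (ltnP n N) => [lt_nN | le_Nn]; last by rewrite (@anti_leq n N) ?n_le.
  have has_zero : has (fun i => f i == 0) (iota 0 N) by rewrite has_find size_iota.
  by have /eqP := nth_find 0 has_zero; rewrite nth_iota.
by move=> /(antitone_leq f_anti); rewrite f_n leqn0 => /eqP.
Qed.

Lemma part_partition_of : part (partition_of f N) = f.
Proof.
apply: functional_extensionality => i; rewrite /part /partition_of -/n.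
case: (ltnP i n) => [lt_in | le_ni]; first by rewrite nth_mkseq.
by rewrite nth_default ?size_mkseq ?f_eq0.
Qed.

Lemma partition_of_partition : is_partition (partition_of f N).
Proof.
rewrite /partition_of -/n; apply/andP; split.
  apply/(sortedP 0) => i; rewrite size_mkseq => lt_iSn.
  by rewrite !nth_mkseq ?(ltnW lt_iSn) //; apply: f_anti.
by apply/(all_nthP 0) => i; rewrite size_mkseq => lt_in; rewrite nth_mkseq // f_gt0.
Qed.

End PartitionOf.

(* Condition (3) of an spo-bumping sequence, row by row: a nonempty row i of n/mm lies
   to the right of a nonempty row i' of mo/l. *)
Definition strips_separated (n mm mo l : nat -> nat) :=
  forall i i', mm i < n i -> l i' < mo i' -> mo i' <= mm i.

Lemma sp_bumpingP la mu nu : is_partition la -> is_partition mu -> is_partition nu ->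
  sp_bumping la mu nu <-> interlaced (part la) (part mu) /\ interlaced (part nu) (part mu).
Proof.
move=> la_part mu_part nu_part; rewrite /sp_bumping.
split=> [[_ [_ [/horizontal_stripP la_mu /horizontal_stripP nu_mu]]] | [la_mu nu_mu]].
  by split; [apply: la_mu | apply: nu_mu].
split=> [i | ]; first by case: (la_mu i).
split=> [i | ]; first by case: (nu_mu i).
by split; apply/horizontal_stripP.
Qed.

Lemma spo_bumpingP la mo mm nu :
  is_partition la -> is_partition mo -> is_partition mm -> is_partition nu ->
  spo_bumping la mo mm nu <->
  [/\ interlaced (part mo) (part la), interlaced (part mo) (part mm),
      interlaced (part nu) (part mm), (part la 0 <> part mo 0 -> part mo 0 = part mm 0)
    & strips_separated (part nu) (part mm) (part mo) (part la)].
Proof.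
move=> la_part mo_part mm_part nu_part; rewrite /spo_bumping.
split=> [[_ [_ [_ [mo_la [mo_mm [nu_mm [top right]]]]]]] | [mo_la mo_mm nu_mm top sep]].
  split=> //; [exact/horizontal_stripP | exact/horizontal_stripP | exact/horizontal_stripP |].
  move=> i i' mm_nu la_mo; have := right i (part mm i).+1 i' (part mo i').
  by rewrite /in_skew ltnSn mm_nu la_mo leqnn => /(_ isT isT).
split=> [i | ]; first by case: (mo_la i).
split=> [i | ]; first by case: (mo_mm i).
split=> [i | ]; first by case: (nu_mm i).
do 3 (split; first exact/horizontal_stripP).
split=> // i j i' j' /andP[mm_j j_nu] /andP[la_j' j'_mo].
by have := sep i i' (leq_trans mm_j j_nu) (leq_trans la_j' j'_mo); lia.
Qed.

Section FillLow.
Variables (n u : nat -> nat) (N m : nat).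

Definition tail_excess a := \sum_(a <= j < N) (n j - u j).

(* u plus the m boxes of n/u in the lowest rows, which are its m leftmost boxes when
   n/u is a horizontal strip *)
Definition fill_low i := u i + minn (n i - u i) (m - tail_excess i.+1).

Lemma tail_excessS a : a < N -> tail_excess a = n a - u a + tail_excess a.+1.
Proof. by move=> lt_aN; rewrite /tail_excess big_ltn. Qed.

Lemma tail_excess_leq a b : a <= b -> tail_excess b <= tail_excess a.
Proof.
move=> le_ab; rewrite /tail_excess; case: (leqP b N) => [le_bN | lt_Nb].
  by rewrite [X in _ <= X](@big_cat_nat _ _ _ b) //= leq_addl.
by rewrite [X in X <= _]big_geq // ltnW.
Qed.

Lemma fill_low_bounds i : u i <= n i -> u i <= fill_low i <= n i.
Proof. rewrite /fill_low; lia. Qed.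

Lemma interlaced_fill_low : interlaced n u -> interlaced n fill_low /\ interlaced fill_low u.
Proof.
by move=> n_u; apply: interlaced_between => // i; apply: fill_low_bounds; case: (n_u i).
Qed.

Lemma sum_fill_low a : \sum_(a <= i < N) (fill_low i - u i) = minn m (tail_excess a).
Proof.
move def_d : (N - a) => d; elim: d a def_d => [|d IH] a def_d.
  by rewrite /tail_excess !big_geq ?minn0 //; lia.
have lt_aN : a < N by lia.
by rewrite big_ltn // IH ?(tail_excessS lt_aN) /fill_low; lia.
Qed.

Hypothesis n_eq0 : forall j, N <= j -> n j = 0.

Lemma fill_low_above i r : fill_low i < n i -> r < i -> fill_low r = u r.
Proof.
move=> row_i lt_ri; have lt_iN : i < N.
  by rewrite ltnNge; apply/negP => /n_eq0 n_i0; move: row_i; rewrite n_i0.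
by move: row_i (tail_excessS lt_iN) (tail_excess_leq lt_ri); rewrite /fill_low; lia.
Qed.

Lemma fill_low_unique mm : interlaced n u -> (forall i, u i <= mm i <= n i) ->
  (forall i i', mm i < n i -> u i' < mm i' -> mm i' <= mm i) ->
  \sum_(0 <= j < N) (mm j - u j) = m -> fill_low =1 mm.
Proof.
move=> n_u u_mm_n sep sum_mm.
have full_below i i' : i < i' -> u i < mm i -> mm i' = n i'.
  move=> lt_ii' u_mm; have [_ n_u_i] := n_u i.
  have := antitone_leq (interlaced_antitone_l n_u) lt_ii'.
  have := u_mm_n i'; case: (ltnP (mm i') (n i')) => [/sep /(_ u_mm) | ]; lia.
move=> i; case: (ltnP i N) => [lt_iN | le_Ni]; last first.
  by have := n_eq0 le_Ni; have := u_mm_n i; rewrite /fill_low; lia.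
have split_sum : \sum_(0 <= j < N) (mm j - u j) = \sum_(0 <= j < i) (mm j - u j) +
    (mm i - u i + \sum_(i.+1 <= j < N) (mm j - u j)).
  by rewrite (@big_cat_nat _ _ _ i) ?(@big_ltn _ _ _ i N) // ltnW.
have lower_le : \sum_(i.+1 <= j < N) (mm j - u j) <= tail_excess i.+1.
  by apply: leq_sum => j _; have := u_mm_n j; lia.
have lower_eq : u i < mm i -> \sum_(i.+1 <= j < N) (mm j - u j) = tail_excess i.+1.
  by move=> u_mm; apply: eq_big_nat => j /andP[lt_ij _]; rewrite (full_below i j).
have upper0 : mm i < n i -> \sum_(0 <= j < i) (mm j - u j) = 0.
  move=> mm_n; rewrite big_nat_cond big1 // => j /andP[/andP[_ lt_ji] _].
  have := u_mm_n j; case: (ltnP (u j) (mm j)) => [u_mm | ]; last by lia.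
  by have := full_below _ _ lt_ji u_mm; lia.
by move: split_sum lower_le lower_eq upper0 sum_mm (u_mm_n i); rewrite /fill_low; lia.
Qed.

End FillLow.

(* l ∪ mm, with the boxes of (l ∩ mm)/u of each row moved down one row *)
Definition bump_outer (l u mm : nat -> nat) i :=
  maxn (l i) (mm i) + (if i is r.+1 then minn (l r) (mm r) - u r else 0).

(* Inverse of [bump_outer]: the boxes of row i+1 of mo outside l ∪ mm came from row i. *)
Definition sp_inner (l mo mm : nat -> nat) i :=
  minn (mm i) (l i) - (mo i.+1 - maxn (l i.+1) (mm i.+1)).

Section BumpOuter.
Variables (l u mm : nat -> nat).
Hypotheses (l_u : interlaced l u) (mm_u : interlaced mm u).

Lemma interlaced_bump_outer :
  interlaced (bump_outer l u mm) mm /\ interlaced (bump_outer l u mm) l.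
Proof. by split=> i; have := l_u i; have := mm_u i; rewrite /bump_outer /=; lia. Qed.

Lemma sp_inner_bump_outer : sp_inner l (bump_outer l u mm) mm =1 u.
Proof. by move=> i; have := l_u i; have := mm_u i; rewrite /sp_inner /bump_outer /=; lia. Qed.

Lemma sum_bump_outer M : l M = 0 ->
  \sum_(0 <= i < M.+1) bump_outer l u mm i + \sum_(0 <= i < M.+1) u i =
  \sum_(0 <= i < M.+1) l i + \sum_(0 <= i < M.+1) mm i.
Proof.
move=> l_M; set g := fun i => minn (l i) (mm i) - u i.
have shift : \sum_(0 <= i < M.+1) (if i is r.+1 then g r else 0) =
    \sum_(0 <= i < M.+1) g i.
  by rewrite big_nat_recl // big_nat_recr //= [g M]/g l_M min0n add0n addn0.
have inner : \sum_(0 <= i < M.+1) g i + \sum_(0 <= i < M.+1) u i =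
    \sum_(0 <= i < M.+1) minn (l i) (mm i).
  rewrite -big_split; apply: eq_bigr => i _.
  by rewrite /g /=; have := l_u i; have := mm_u i; lia.
have minmax : \sum_(0 <= i < M.+1) maxn (l i) (mm i) +
    \sum_(0 <= i < M.+1) minn (l i) (mm i) =
    \sum_(0 <= i < M.+1) l i + \sum_(0 <= i < M.+1) mm i.
  by rewrite -!big_split; apply: eq_bigr => i _ /=; lia.
by rewrite /bump_outer big_split /= shift; lia.
Qed.

End BumpOuter.

Lemma strips_separated_fill_low l n u N m : interlaced l u -> interlaced n u ->
  (forall j, N <= j -> n j = 0) ->
  strips_separated n (fill_low n u N m) (bump_outer l u (fill_low n u N m)) l.
Proof.
move=> l_u n_u n_eq0; have [n_mm mm_u] := interlaced_fill_low N m n_u.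
have [mo_mm _] := interlaced_bump_outer l_u mm_u.
move=> i i' mm_n la_mo; case: (ltngtP i' i) => [lt_i'i | lt_ii' | eq_i'i].
- move: la_mo (fill_low_above n_eq0 mm_n lt_i'i) (l_u i'); rewrite /bump_outer.
  case: i' lt_i'i => [|r] lt_ri /=; first by lia.
  by rewrite (fill_low_above n_eq0 mm_n (ltnW lt_ri)); lia.
- case: i' lt_ii' la_mo => [//|r]; rewrite ltnS => le_ir _; have [_ mo_r] := mo_mm r.
  exact: leq_trans mo_r (antitone_leq (interlaced_antitone_r n_mm) le_ir).
- move: la_mo; rewrite eq_i'i /bump_outer; case: i mm_n {eq_i'i} => [|r] mm_n /=; first by lia.
  by rewrite (fill_low_above n_eq0 mm_n (ltnSn r)); lia.
Qed.

Section SpInner.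
Variables (l n mo mm : nat -> nat).
Hypotheses (mo_l : interlaced mo l) (mo_mm : interlaced mo mm).

Lemma bump_outer_sp_inner : (l 0 <> mo 0 -> mo 0 = mm 0) ->
  bump_outer l (sp_inner l mo mm) mm =1 mo.
Proof.
move=> top; case=> [|r]; rewrite /bump_outer /sp_inner /=.
  by have := mo_l 0; have := mo_mm 0; lia.
by have := mo_l r; have := mo_mm r; have := mo_l r.+1; have := mo_mm r.+1; lia.
Qed.

Lemma sum_sp_inner N : (l 0 <> mo 0 -> mo 0 = mm 0) -> mo N = 0 ->
  \sum_(0 <= i < N) sp_inner l mo mm i + \sum_(0 <= i < N) mo i =
  \sum_(0 <= i < N) mm i + \sum_(0 <= i < N) l i.
Proof.
move=> top mo_N; set e := fun i => mo i - maxn (l i) (mm i).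
have shift : \sum_(0 <= i < N) e i.+1 = \sum_(0 <= i < N) e i.
  have e0 : e 0 = 0 by rewrite /e /=; have := mo_l 0; have := mo_mm 0; lia.
  have eN : e N = 0 by rewrite /e /= mo_N.
  apply/eqP; rewrite -(eqn_add2l (e 0)) -big_nat_recl // big_nat_recr //=.
  by rewrite eN e0 addn0 add0n.
have inner : \sum_(0 <= i < N) sp_inner l mo mm i + \sum_(0 <= i < N) e i.+1 =
    \sum_(0 <= i < N) minn (mm i) (l i).
  rewrite -big_split; apply: eq_bigr => i _.
  by rewrite /sp_inner /e /=; have := mo_l i; have := mo_mm i; lia.
have outer : \sum_(0 <= i < N) e i + \sum_(0 <= i < N) maxn (l i) (mm i) =
    \sum_(0 <= i < N) mo i.
  rewrite -big_split; apply: eq_bigr => i _.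
  by rewrite /e /=; have := mo_l i; have := mo_mm i; lia.
have minmax : \sum_(0 <= i < N) minn (mm i) (l i) +
    \sum_(0 <= i < N) maxn (l i) (mm i) = \sum_(0 <= i < N) mm i + \sum_(0 <= i < N) l i.
  by rewrite -!big_split; apply: eq_bigr => i _ /=; lia.
lia.
Qed.

Hypotheses (n_mm : interlaced n mm) (sep : strips_separated n mm mo l).

Lemma interlaced_sp_inner :
  interlaced l (sp_inner l mo mm) /\ interlaced n (sp_inner l mo mm).
Proof.
have g_max i : maxn (l i.+1) (mm i.+1) <= sp_inner l mo mm i.
  by rewrite /sp_inner; have := mo_l i; have := mo_mm i; have := mo_l i.+1;
    have := mo_mm i.+1; lia.
split=> i; first by split; [rewrite /sp_inner; lia | have := g_max i; lia].
have [mm_n n_mmS] := n_mm i; split; first by move: mm_n; rewrite /sp_inner; lia.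
case: (ltnP (mm i.+1) (n i.+1)) => [mmS_nS | ]; last by have := g_max i; lia.
have mo_max : mo i.+1 <= maxn (l i.+1) (mm i.+1).
  by case: (ltnP (l i.+1) (mo i.+1)) => [/(sep mmS_nS) | ]; lia.
have [mm_mo mo_mmS] := mo_mm i; have [l_mo mo_lS] := mo_l i.
have n_l : n i.+1 <= l i.
  rewrite leqNgt; apply/negP => l_n.
  by have := sep mmS_nS (leq_trans l_n (leq_trans n_mmS mm_mo)); lia.
by rewrite /sp_inner; lia.
Qed.

Lemma sp_inner_separated i i' :
  mm i < n i -> sp_inner l mo mm i' < mm i' -> mm i' <= mm i.
Proof.
move=> mm_n inner_mm; case: (leqP i i') => [le_ii' | lt_i'i].
  exact: (antitone_leq (interlaced_antitone_r n_mm) le_ii').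
have [mm_mo _] := mo_mm i'; case: (ltnP (l i') (mm i')) => [l_mm | mm_l].
  by have := sep mm_n (leq_trans l_mm mm_mo); lia.
have := antitone_leq (interlaced_antitone_r n_mm) lt_i'i.
move: inner_mm (mo_l i'.+1) (mo_mm i'.+1) (mo_l i') (sep mm_n (i' := i'.+1)).
rewrite /sp_inner; lia.
Qed.

End SpInner.

Lemma partition_of_part x N : is_partition x -> size x <= N -> partition_of (part x) N = x.
Proof.
move=> x_part xN; have x_N : part x N = 0 by rewrite /part nth_default.
have x_anti := antitone_part x_part.
by apply: part_inj (partition_of_partition N x_anti) x_part _; rewrite part_partition_of.
Qed.

Definition row_bound (la nu : seq nat) := (size la + size nu).+1.

Definition spo_of (la nu : seq nat) (m1 : nat) (mu : seq nat) : seq nat * seq nat :=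
  let mm := fill_low (part nu) (part mu) (row_bound la nu) m1 in
  (partition_of (bump_outer (part la) (part mu) mm) (row_bound la nu),
   partition_of mm (row_bound la nu)).

Definition sp_of (la nu : seq nat) (p : seq nat * seq nat) : seq nat :=
  partition_of (sp_inner (part la) (part p.1) (part p.2)) (row_bound la nu).

Lemma size_row_bound la nu : size la <= row_bound la nu /\ size nu <= row_bound la nu.
Proof. by rewrite /row_bound; split; lia. Qed.

Lemma part_row_bound la nu i :
  row_bound la nu <= i.+1 -> part la i = 0 /\ part nu i = 0.
Proof. by rewrite /row_bound /part ltnS => le_i; rewrite !nth_default //; lia. Qed.

Lemma interlaced_row_bound a la nu : interlaced a (part la) -> a (row_bound la nu) = 0.
Proof.
have [la_M _] := @part_row_bound la nu (size la + size nu) (leqnn _).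
by move=> a_la; have [_] := a_la (size la + size nu); rewrite la_M leqn0 => /eqP.
Qed.

Section Forward.
Variables (la nu mu : seq nat) (m1 : nat).
Hypotheses (la_part : is_partition la) (nu_part : is_partition nu)
  (mu_part : is_partition mu) (la_mu_nu : sp_bumping la mu nu).

Local Notation N := (row_bound la nu).
Local Notation mm := (fill_low (part nu) (part mu) N m1).
Local Notation mo := (bump_outer (part la) (part mu) mm).
Local Notation p := (spo_of la nu m1 mu).

Let la_mu : interlaced (part la) (part mu).
Proof. by have [] := (sp_bumpingP la_part mu_part nu_part).1 la_mu_nu. Qed.

Let nu_mu : interlaced (part nu) (part mu).
Proof. by have [] := (sp_bumpingP la_part mu_part nu_part).1 la_mu_nu. Qed.

Let nu_eq0 j : N <= j -> part nu j = 0.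
Proof. by move=> le_Nj; have [] := part_row_bound (leqW le_Nj). Qed.

Let nu_mm : interlaced (part nu) mm. Proof. by have [] := interlaced_fill_low N m1 nu_mu. Qed.
Let mm_mu : interlaced mm (part mu). Proof. by have [] := interlaced_fill_low N m1 nu_mu. Qed.
Let mo_mm : interlaced mo mm. Proof. by have [] := interlaced_bump_outer la_mu mm_mu. Qed.
Let mo_la : interlaced mo (part la). Proof. by have [] := interlaced_bump_outer la_mu mm_mu. Qed.

Let mo_N : mo N = 0. Proof. exact: interlaced_row_bound mo_la. Qed.

Let mm_N : mm N = 0.
Proof. by have [mm_mo _] := mo_mm N; move: mm_mo; rewrite mo_N; lia. Qed.

Let part_p : part p.1 = mo /\ part p.2 = mm.
Proof.
split; first exact: part_partition_of (interlaced_antitone_l mo_mm) mo_N.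
exact: part_partition_of (interlaced_antitone_r nu_mm) mm_N.
Qed.

Let p1_part : is_partition p.1.
Proof. exact: partition_of_partition N (interlaced_antitone_l mo_mm). Qed.

Let p2_part : is_partition p.2.
Proof. exact: partition_of_partition N (interlaced_antitone_r nu_mm). Qed.

Let size_p : size p.1 <= N /\ size p.2 <= N.
Proof.
have [part_p1 part_p2] := part_p.
by split; apply: size_leq_part; rewrite ?part_p1 ?part_p2.
Qed.

Let size_mu : size mu <= N.
Proof.
apply: size_leq_part => //; have [mu_la _] := la_mu N.
by move: mu_la; have [-> _] := part_row_bound (leqnSn N); lia.
Qed.

Lemma spo_of_bumping : (is_partition p.1 && is_partition p.2) /\ spo_bumping la p.1 p.2 nu.
Proof.
split; first by rewrite p1_part p2_part.
apply/spo_bumpingP => //; case: part_p => -> ->.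
split=> //; first by rewrite /bump_outer /=; lia.
exact: strips_separated_fill_low la_mu nu_mu nu_eq0.
Qed.

Lemma spo_of_skew_size l k : l + m1 <= k -> skew_size la mu = l -> skew_size nu mu = k - l ->
  [/\ skew_size p.1 la = m1, skew_size p.1 p.2 = l & skew_size nu p.2 = k - l - m1].
Proof.
move=> lm1k la_mu_l nu_mu_kl.
have [size_la size_nu] := size_row_bound la nu.
case: size_p => size_p1 size_p2.
move: la_mu_l nu_mu_kl; rewrite /skew_size !(psize_sum size_la, psize_sum size_nu,
  psize_sum size_mu, psize_sum size_p1, psize_sum size_p2); case: part_p => -> ->.
have mu_la : \sum_(0 <= i < N) part mu i <= \sum_(0 <= i < N) part la i.
  by apply: leq_sum => i _; case: (la_mu i).
have mu_nu : \sum_(0 <= i < N) part mu i <= \sum_(0 <= i < N) part nu i.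
  by apply: leq_sum => i _; case: (nu_mu i).
have excess : tail_excess (part nu) (part mu) N 0 =
    \sum_(0 <= i < N) part nu i - \sum_(0 <= i < N) part mu i.
  by rewrite /tail_excess sumnB // => i _; case: (nu_mu i).
have mu_mm : \sum_(0 <= i < N) part mu i <= \sum_(0 <= i < N) mm i.
  by apply: leq_sum => i _; case: (mm_mu i).
have sum_mm : \sum_(0 <= i < N) (mm i - part mu i) =
    \sum_(0 <= i < N) mm i - \sum_(0 <= i < N) part mu i.
  by rewrite sumnB // => i _; case: (mm_mu i).
have [la_M _] := @part_row_bound la nu (size la + size nu) (leqnn _).
have := sum_bump_outer la_mu mm_mu la_M; rewrite -[(size la + size nu).+1]/N.
by have := sum_fill_low (part nu) (part mu) N m1 0; rewrite excess sum_mm; split; lia.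
Qed.

Lemma sp_of_spo_of : sp_of la nu p = mu.
Proof.
rewrite /sp_of; case: part_p => -> ->.
rewrite (functional_extensionality _ _ (sp_inner_bump_outer la_mu mm_mu)).
exact: partition_of_part.
Qed.

End Forward.

Section Backward.
Variables (la nu mo mm : seq nat) (m1 : nat).
Hypotheses (la_part : is_partition la) (nu_part : is_partition nu)
  (mo_part : is_partition mo) (mm_part : is_partition mm)
  (la_mo_mm_nu : spo_bumping la mo mm nu).

Local Notation N := (row_bound la nu).
Local Notation g := (sp_inner (part la) (part mo) (part mm)).
Local Notation mu := (sp_of la nu (mo, mm)).

Let spo_rows := (spo_bumpingP la_part mo_part mm_part nu_part).1 la_mo_mm_nu.
Let mo_la : interlaced (part mo) (part la). Proof. by case: spo_rows. Qed.
Let mo_mm : interlaced (part mo) (part mm). Proof. by case: spo_rows. Qed.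
Let nu_mm : interlaced (part nu) (part mm). Proof. by case: spo_rows. Qed.
Let top : part la 0 <> part mo 0 -> part mo 0 = part mm 0. Proof. by case: spo_rows. Qed.
Let sep : strips_separated (part nu) (part mm) (part mo) (part la).
Proof. by case: spo_rows. Qed.

Let la_g : interlaced (part la) g.
Proof. by case: (interlaced_sp_inner mo_la mo_mm nu_mm sep). Qed.

Let nu_g : interlaced (part nu) g.
Proof. by case: (interlaced_sp_inner mo_la mo_mm nu_mm sep). Qed.

Let mo_N : part mo N = 0. Proof. exact: interlaced_row_bound mo_la. Qed.

Let g_N : g N = 0.
Proof. by have [g_la _] := la_g N; have [la_N _] := part_row_bound (leqnSn N); lia. Qed.

Let part_mu : part mu = g.
Proof. exact: part_partition_of (interlaced_antitone_r la_g) g_N. Qed.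

Let mu_part : is_partition mu.
Proof. exact: partition_of_partition N (interlaced_antitone_r la_g). Qed.

Let size_mo : size mo <= N. Proof. exact: size_leq_part mo_N. Qed.

Let size_mm : size mm <= N.
Proof.
apply: size_leq_part => //; have [mm_mo _] := mo_mm N.
by move: mm_mo; rewrite mo_N leqn0 => /eqP.
Qed.

Let size_mu : size mu <= N. Proof. by apply: size_leq_part; rewrite // part_mu. Qed.

Let sum_mu : \sum_(0 <= i < N) g i + \sum_(0 <= i < N) part mo i =
  \sum_(0 <= i < N) part mm i + \sum_(0 <= i < N) part la i.
Proof. exact: sum_sp_inner. Qed.

Lemma sp_of_bumping : is_partition mu /\ sp_bumping la mu nu.
Proof.
by split=> //; apply/sp_bumpingP => //; rewrite part_mu; split.
Qed.

Lemma sp_of_skew_size l k : l + m1 <= k -> skew_size mo la = m1 -> skew_size mo mm = l ->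
  skew_size nu mm = k - l - m1 -> skew_size la mu = l /\ skew_size nu mu = k - l.
Proof.
move=> lm1k; have [size_la size_nu] := size_row_bound la nu.
rewrite /skew_size !(psize_sum size_la, psize_sum size_nu, psize_sum size_mo,
  psize_sum size_mm, psize_sum size_mu) part_mu.
have la_mo : \sum_(0 <= i < N) part la i <= \sum_(0 <= i < N) part mo i.
  by apply: leq_sum => i _; case: (mo_la i).
have mm_nu : \sum_(0 <= i < N) part mm i <= \sum_(0 <= i < N) part nu i.
  by apply: leq_sum => i _; case: (nu_mm i).
by move: sum_mu; lia.
Qed.

Lemma spo_of_sp_of : skew_size mo la = m1 -> spo_of la nu m1 mu = (mo, mm).
Proof.
have [size_la _] := size_row_bound la nu.
rewrite /skew_size (psize_sum size_mo) (psize_sum size_la) => mo_la_m1.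
have g_mm i : g i <= part mm i by rewrite /sp_inner; lia.
have fill_mu : fill_low (part nu) g N m1 = part mm.
  apply: functional_extensionality; apply: fill_low_unique => //.
  - by move=> j le_Nj; have [] := part_row_bound (leqW le_Nj).
  - by move=> i; rewrite g_mm; case: (nu_mm i).
  - exact: sp_inner_separated.
  - by rewrite sumnB //; move: sum_mu; lia.
rewrite /spo_of part_mu fill_mu.
rewrite (functional_extensionality _ _ (bump_outer_sp_inner mo_la mo_mm top)).
by rewrite !partition_of_part.
Qed.

End Backward.

Lemma spo_of_valid la nu k l m1 mu : is_partition la -> is_partition nu -> l + m1 <= k ->
  [/\ is_partition mu, sp_bumping la mu nu, skew_size la mu = l & skew_size nu mu = k - l] ->
  [/\ is_partition (spo_of la nu m1 mu).1 && is_partition (spo_of la nu m1 mu).2,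
      spo_bumping la (spo_of la nu m1 mu).1 (spo_of la nu m1 mu).2 nu,
      skew_size (spo_of la nu m1 mu).1 la = m1,
      skew_size (spo_of la nu m1 mu).1 (spo_of la nu m1 mu).2 = l &
      skew_size nu (spo_of la nu m1 mu).2 = k - l - m1].
Proof.
move=> la_part nu_part lm1k [mu_part la_mu_nu la_mu_l nu_mu_kl].
have [] := spo_of_skew_size (m1 := m1) la_part nu_part mu_part la_mu_nu lm1k la_mu_l nu_mu_kl.
by case: (spo_of_bumping m1 la_part nu_part mu_part la_mu_nu).
Qed.

Lemma sp_of_valid la nu k l m1 p : is_partition la -> is_partition nu -> l + m1 <= k ->
  [/\ is_partition p.1 && is_partition p.2, spo_bumping la p.1 p.2 nu,
      skew_size p.1 la = m1, skew_size p.1 p.2 = l & skew_size nu p.2 = k - l - m1] ->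
  [/\ is_partition (sp_of la nu p), sp_bumping la (sp_of la nu p) nu,
      skew_size la (sp_of la nu p) = l & skew_size nu (sp_of la nu p) = k - l].
Proof.
case: p => mo mm la_part nu_part lm1k [/andP[mo_part mm_part] bump mo_la mo_mm nu_mm].
have [] := sp_of_skew_size la_part nu_part mo_part mm_part bump lm1k mo_la mo_mm nu_mm.
by case: (sp_of_bumping la_part nu_part mo_part mm_part bump).
Qed.

Theorem mainTheorem9 (la nu : seq nat) (k l m1 : nat) :
  is_partition la -> is_partition nu -> l + m1 <= k ->
  let m2 := k - l - m1 in
  exists f : {mu : seq nat | [/\ is_partition mu, sp_bumping la mu nu,
                                 skew_size la mu = l & skew_size nu mu = k - l]} ->
             {p : seq nat * seq nat |
                [/\ is_partition p.1 && is_partition p.2,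
                    spo_bumping la p.1 p.2 nu,
                    skew_size p.1 la = m1,
                    skew_size p.1 p.2 = l & skew_size nu p.2 = m2]},
    bijective f.
Proof.
move=> la_part nu_part lm1k m2.
exists (fun x => exist _ _ (spo_of_valid la_part nu_part lm1k (svalP x))).
exists (fun y => exist _ _ (sp_of_valid la_part nu_part lm1k (svalP y))).
- case=> mu sp; have [mu_part la_mu_nu _ _] := sp.
  apply: ProofIrrelevanceTheory.subset_eq_compat; exact: sp_of_spo_of.
- case=> -[mo mm] spo; have [/andP[mo_part mm_part] bump mo_la _ _] := spo.
  apply: ProofIrrelevanceTheory.subset_eq_compat; exact: spo_of_sp_of.
Qed.
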